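(* Let $G$ be a countable discrete group acting minimally by homeomorphisms on a compact Hausdorff space $X$, and let $\mu\in P(G,C(X))$ have full support. Then every $\mu$-stationary state on $C(X)$ is faithful.
   Context: Minimal means every orbit is dense; $(g\cdot f)(x)=f(g^{-1}x)$. A generalized $(G,C(X))$-probability measure is a formal sum $\mu=\sum_{i\in I}f_is_if_i$ with $I$ an index set, $s_i\in G$ (repetitions allowed), $f_i\in C(X)$, $f_i\ge0$, $f_i\ne0$, $\sum_if_i^2=1$; $P(G,C(X))$ is the set of these. For $h\in C(X)$, $\mu h=\sum_if_i(s_i\cdot h)f_i$; a state $\tau$ on $C(X)$ is $\mu$-stationary if $\tau(\mu h)=\tau(h)$ for all $h$. $\mu$ has full support if, writing $I_s=\{i: s_i=s\}$, for each $s\in G$ there is $\delta>0$ with $\sum_{i\in I_s}f_i^2\ge\delta$ (equivalently, for all $s\in G$, $x\in X$ there is $i\in I_s$ with $f_i(x)>0$). *)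

From HB Require Import structures.
From mathcomp Require Import all_boot all_order all_algebra.
From mathcomp Require Import all_classical all_reals all_analysis.
Set Implicit Arguments. Unset Strict Implicit. Unset Printing Implicit Defensive.
Import Order.TTheory GRing.Theory Num.Theory numFieldNormedType.Exports.
Local Open Scope classical_set_scope.
Local Open Scope ring_scope.

Definition is_group (G : Type) (mul : G -> G -> G) (one : G) (inv : G -> G) : Prop :=
  [/\ (forall a b c, mul a (mul b c) = mul (mul a b) c),
      (forall a, mul one a = a),
      (forall a, mul a one = a),
      (forall a, mul (inv a) a = one) &
      (forall a, mul a (inv a) = one)].

(* A left action of G on X by homeomorphisms (each act g is continuous,
   with continuous inverse act (inv g) by the action axioms). *)
Definition is_homeo_action (G : Type) (X : topologicalType)
    (mul : G -> G -> G) (one : G) (act : G -> X -> X) : Prop :=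
  [/\ (forall x, act one x = x),
      (forall g h x, act (mul g h) x = act g (act h x)) &
      (forall g, continuous (act g))].

Definition minimal_action (G : Type) (X : topologicalType) (act : G -> X -> X) : Prop :=
  forall x : X, closure (range (fun g => act g x)) = [set: X].

Definition gact (G : Type) (X : Type) (R : Type) (inv : G -> G) (act : G -> X -> X)
    (g : G) (h : X -> R) : X -> R := fun x => h (act (inv g) x).

(* Generalized (G, C(X))-probability measure  mu = sum_{i in I} f_i s_i f_i. *)
Definition is_gen_prob_measure (R : realType) (G : Type) (X : topologicalType)
    (I : choiceType) (s : I -> G) (f : I -> X -> R) : Prop :=
  [/\ (forall i, continuous (f i)),
      (forall i x, 0 <= f i x),
      (forall i, exists x, f i x != 0) &
      (forall x, (\esum_(i in [set: I]) ((f i x) ^+ 2)%:E = 1%:E)%E)].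

Definition full_support (R : realType) (G : Type) (X : topologicalType)
    (I : choiceType) (s : I -> G) (f : I -> X -> R) : Prop :=
  forall g : G, exists2 delta : R, 0 < delta &
    forall x, (delta%:E <= \esum_(i in [set i | s i = g]) ((f i x) ^+ 2)%:E)%E.

Definition has_unordered_sum (R : realType) (I : choiceType) (a : I -> R) (l : R) : Prop :=
  forall e : R, 0 < e -> exists2 F0 : set I, finite_set F0 &
    forall F : set I, finite_set F -> F0 `<=` F -> `|\sum_(i \in F) a i - l| < e.

Definition mu_apply (R : realType) (G : Type) (X : topologicalType) (I : choiceType)
    (inv : G -> G) (act : G -> X -> X) (s : I -> G) (f : I -> X -> R)
    (h : X -> R) : X -> R :=
  fun x => xget 0 [set l | has_unordered_sum (fun i => f i x * gact inv act (s i) h x * f i x) l].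

Definition is_state (R : realType) (X : topologicalType) (tau : (X -> R) -> R) : Prop :=
  [/\ (forall (a : R) (h k : X -> R), continuous h -> continuous k ->
         tau (fun x => a * h x + k x) = a * tau h + tau k),
      (forall h : X -> R, continuous h -> (forall x, 0 <= h x) -> 0 <= tau h) &
      tau (fun _ => 1) = 1].

Definition is_stationary (R : realType) (G : Type) (X : topologicalType) (I : choiceType)
    (inv : G -> G) (act : G -> X -> X) (s : I -> G) (f : I -> X -> R)
    (tau : (X -> R) -> R) : Prop :=
  forall h : X -> R, continuous h -> tau (mu_apply inv act s f h) = tau h.

Definition is_faithful (R : realType) (X : topologicalType) (tau : (X -> R) -> R) : Prop :=
  forall h : X -> R, continuous h -> (forall x, 0 <= h x) -> (exists x, h x != 0) ->
    0 < tau h.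

From HB Require Import structures.
From mathcomp Require Import all_boot all_order all_algebra.
From mathcomp Require Import all_classical all_reals all_analysis.
From mathcomp Require Import finmap.
From mathcomp Require Import lra.
Set Implicit Arguments. Unset Strict Implicit. Unset Printing Implicit Defensive.
Import Order.TTheory GRing.Theory Num.Theory numFieldNormedType.Exports.
Local Open Scope classical_set_scope.
Local Open Scope ring_scope.

(* Let tau be mu-stationary and h >= 0 a nonzero continuous function with
   tau h = 0.  The proof has two halves.
   - Analytic half: mu h = sum_i f_i (s_i . h) f_i converges pointwise and,
     by a Dini-type argument on the compact space X, uniformly from below by
     finite partial sums; hence mu h is continuous.  Full support then gives
     c (g . h) <= mu h for some c > 0, so by positivity and stationarity
     0 <= c tau (g . h) <= tau (mu h) = tau h = 0: every translate of h is
     tau-null.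
   - Topological half: by minimality every point is moved by some g into
     the open set {h > 0}; compactness extracts finitely many translates
     whose positive rescaled sum k satisfies k >= 1 on X.
   Then 1 = tau 1 <= tau k = 0, a contradiction. *)

(* A topological space with a chosen point; the library's covering
   characterisation of compactness is stated for pointed spaces. *)
Definition pointed_at {X : topologicalType} (x0 : X) : Type := X.
HB.instance Definition _ (X : topologicalType) (x0 : X) :=
  Topological.copy (pointed_at x0) X.
HB.instance Definition _ (X : topologicalType) (x0 : X) :=
  isPointed.Build (pointed_at x0) x0.

Section CompactSpace.
Variable X : topologicalType.
Hypothesis cpt : compact [set: X].

Lemma compact_finite_subcover (J : choiceType) (D : set J) (V : J -> set X) :
  (forall j, D j -> open (V j)) -> (forall x, exists2 j, D j & V j x) ->
  exists D' : {fset J}, (forall j, j \in D' -> D j) /\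
                        forall x, exists2 j, j \in D' & V j x.
Proof.
have [[x0 _]|noX] := pselect (exists x : X, True); last first.
  move=> _ _; exists fset0; split => [j|x]; first by rewrite in_fset0.
  by exfalso; apply: noX; exists x.
move=> Vo cov.
have cpt' : cover_compact [set: pointed_at x0] by rewrite -compact_cover.
have [|D' D'D H] := cpt' J D V Vo; first by move=> x _; have [j] := cov x; exists j.
exists D'; split => [j /D'D|x]; first exact: set_mem.
by have [j /= Dj Vj] := H x I; exists j.
Qed.

Lemma continuous_bounded (R : realType) (h : X -> R) :
  continuous h -> exists2 M, 0 < M & forall x, h x <= M.
Proof.
move=> hc; have : bounded_set (h @` [set: X]).
  apply: compact_bounded; apply: continuous_compact => //.
  exact: continuous_subspaceT.
move=> [M [_ HM]]; exists (`|M| + 1) => [|x]; first by rewrite ltr_pwDr.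
have /(_ (h x) (imageT h x)) /= := HM (`|M| + 1) (ltr_pwDr ltr01 (ler_norm M)).
exact: le_trans (ler_norm (h x)).
Qed.

End CompactSpace.

Section ContinuousFunctions.
Variables (R : realType) (X : topologicalType).

Lemma open_gt_continuous (h : X -> R) (r : R) :
  continuous h -> open [set x | r < h x].
Proof. by move=> hc; exact: (@open_comp _ _ h _ (fun x _ => hc x) (@open_gt _ r)). Qed.

Lemma continuous_mul (u v : X -> R) :
  continuous u -> continuous v -> continuous (fun x => u x * v x).
Proof. by move=> uc vc x; apply: cvgM; [exact: uc|exact: vc]. Qed.

Lemma continuous_bigsum (J : Type) (r : seq J) (a : J -> X -> R) :
  (forall j, continuous (a j)) -> continuous (fun x => \sum_(j <- r) a j x).
Proof.
move=> ac; elim: r => [|j r IH].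
  under eq_fun do rewrite big_nil; exact: cst_continuous.
under eq_fun do rewrite big_cons.
by move=> x; apply: continuousD; [exact: ac|exact: IH].
Qed.

Lemma continuous_fsum (J : choiceType) (F : set J) (a : J -> X -> R) :
  finite_set F -> (forall j, continuous (a j)) ->
  continuous (fun x => \sum_(j \in F) a j x).
Proof.
move=> fF ac; under eq_fun do rewrite fsbig_finite //.
exact: continuous_bigsum.
Qed.

(* A function squeezed between continuous functions T <= m <= T + e, for
   every e > 0, is continuous (a uniform limit of continuous functions). *)
Lemma continuous_uniform_lower_approx (m : X -> R) :
  (forall e, 0 < e -> exists2 T : X -> R,
     continuous T & forall y, T y <= m y <= T y + e) ->
  continuous m.
Proof.
move=> approx x; apply/cvgrPdist_lt => eps eps0.
have e3 : 0 < eps / 3 by lra.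
have [T Tc TmT] := approx _ e3.
have /cvgrPdist_lt/(_ _ e3) := Tc x; apply: filterS => y.
have /andP[? ?] := TmT x; have /andP[? ?] := TmT y.
by rewrite !ltr_norml => /andP[? ?]; apply/andP; split; lra.
Qed.

End ContinuousFunctions.

Section Sums.
Variables (R : realType) (I : choiceType).

Lemma fsum_le_subset (a : I -> R) (A B : set I) :
  finite_set A -> finite_set B -> A `<=` B -> (forall i, 0 <= a i) ->
  \sum_(i \in A) a i <= \sum_(i \in B) a i.
Proof.
move=> fA fB AB a0; rewrite -lee_fin -!fsumEFin //.
apply: lee_fsum_nneg_subset => //; first by apply/subsetP.
by move=> t _; rewrite lee_fin.
Qed.

Lemma ler_fsum (a b : I -> R) (F : set I) :
  finite_set F -> (forall i, F i -> a i <= b i) ->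
  \sum_(i \in F) a i <= \sum_(i \in F) b i.
Proof.
move=> fF ab; rewrite -lee_fin -!fsumEFin //.
by apply: lee_fsum => // i Fi; rewrite lee_fin; apply: ab.
Qed.

Lemma fsumrB (a b : I -> R) (F : set I) : finite_set F ->
  \sum_(i \in F) (a i - b i) = \sum_(i \in F) a i - \sum_(i \in F) b i.
Proof. by move=> fF; rewrite !fsbig_finite // sumrB. Qed.

(* A family of nonnegative reals with bounded finite partial sums is
   unconditionally summable (its sum is the sup of the partial sums). *)
Lemma unordered_sum_exists (b : I -> R) (B : R) :
  (forall i, 0 <= b i) -> (forall F, finite_set F -> \sum_(i \in F) b i <= B) ->
  exists l, has_unordered_sum b l.
Proof.
move=> b0 bB; pose S := [set \sum_(i \in F) b i | F in @finite_set I].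
have hS : has_sup S.
  split; first by exists 0; exists set0 => //; rewrite fsbig_set0.
  by exists B => _ [F fF <-]; apply: bB.
exists (sup S) => e e0.
have [_ [F0 fF0 <-] H] := sup_adherent e0 hS.
exists F0 => // F fF F0F.
have := fsum_le_subset fF0 fF F0F b0.
have : \sum_(i \in F) b i <= sup S by apply: sup_upper_bound => //; exists F.
by move=> *; rewrite ler0_norm; lra.
Qed.

Lemma unordered_sum_ge_partial (b : I -> R) (l : R) :
  (forall i, 0 <= b i) -> has_unordered_sum b l ->
  forall F, finite_set F -> \sum_(i \in F) b i <= l.
Proof.
move=> b0 H F fF; apply/ler_addgt0Pr => e e0.
have [F0 fF0 HF] := H e e0.
have fU : finite_set (F `|` F0) by rewrite finite_setU.
have := HF _ fU (@subsetUr _ F F0).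
have := fsum_le_subset fF fU (@subsetUl _ F F0) b0.
have := ler_norm (\sum_(i \in F `|` F0) b i - l).
lra.
Qed.

Lemma esum_uniform_finite_approx (X : topologicalType) (A : set I)
    (a : I -> X -> R) (c e : R) :
  compact [set: X] -> (forall i, continuous (a i)) -> (forall i x, 0 <= a i x) ->
  0 < e -> (forall x, (c%:E <= \esum_(i in A) (a i x)%:E)%E) ->
  exists F : set I, [/\ finite_set F, F `<=` A & forall x, c - e < \sum_(i \in F) a i x].
Proof.
move=> cpt ac a0 e0 H.
pose D := [set F : set I | finite_set F /\ F `<=` A].
pose V := fun F : set I => [set x | c - e < \sum_(i \in F) a i x].
have Vo : forall F, D F -> open (V F).
  by move=> F [fF _]; apply: open_gt_continuous; apply: continuous_fsum.
have Vc : forall x, exists2 F, D F & V F x.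
  move=> x; have : ((c - e)%:E < \esum_(i in A) (a i x)%:E)%E.
    by apply: lt_le_trans (H x); rewrite lte_fin; lra.
  move=> /ereal_sup_gt [_ [F [fF FA] <-]].
  by rewrite fsumEFin // lte_fin => HF; exists F.
have [D' [D'D cov]] := compact_finite_subcover cpt Vo Vc.
have fU : finite_set (\bigcup_(F in [set` D']) F).
  by apply: bigcup_finite; [exact: finite_fset|move=> F /= /D'D []].
exists (\bigcup_(F in [set` D']) F); split => //.
  by move=> i [F /= /D'D [_ FA]] /FA.
move=> x; have [F FD' VF] := cov x.
apply: lt_le_trans VF _; apply: fsum_le_subset => //.
- by have [] := D'D _ FD'.
- by move=> i Fi; exists F.
Qed.

End Sums.

Section States.
Variables (R : realType) (X : topologicalType) (tau : (X -> R) -> R).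
Hypothesis st : is_state tau.

Lemma state_cst0 : tau (fun _ => 0) = 0.
Proof.
case: st => lin _ _.
have := lin 1 (fun _ => 0) (fun _ => 0) (@cst_continuous _ _ _) (@cst_continuous _ _ _).
have -> : (fun x : X => 1 * (0:R) + 0) = (fun _ => 0).
  by apply/funext => x; rewrite mul1r addr0.
lra.
Qed.

Lemma state_scale (a : R) (h : X -> R) :
  continuous h -> tau (fun x => a * h x) = a * tau h.
Proof.
move=> hc; case: st => lin _ _.
have := lin a h (fun _ => 0) hc (@cst_continuous _ _ _).
under eq_fun do rewrite addr0.
by rewrite state_cst0 addr0.
Qed.

Lemma state_mono (h k : X -> R) :
  continuous h -> continuous k -> (forall x, h x <= k x) -> tau h <= tau k.
Proof.
move=> hc kc hk; case: st => lin pos _.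
have kBhc : continuous (fun x => k x - h x) by move=> x; apply: cvgB; [exact: kc|exact: hc].
have := lin 1 _ h kBhc hc.
under eq_fun do rewrite mul1r subrK.
have kBh0 : forall x, 0 <= k x - h x by move=> x; rewrite subr_ge0.
have := pos _ kBhc kBh0; lra.
Qed.

Lemma state_bigsum (J : Type) (r : seq J) (c : J -> R) (u : J -> X -> R) :
  (forall j, continuous (u j)) ->
  tau (fun x => \sum_(j <- r) c j * u j x) = \sum_(j <- r) c j * tau (u j).
Proof.
move=> uc; elim: r => [|j r IH].
  by under eq_fun do rewrite big_nil; rewrite big_nil state_cst0.
under eq_fun do rewrite big_cons; rewrite big_cons -IH.
case: st => lin _ _; apply: lin => //.
by apply: continuous_bigsum => j'; apply: continuous_mul; [exact: cst_continuous|exact: uc].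
Qed.

End States.

Lemma translate_continuous (R : realType) (G : Type) (X : topologicalType)
    (inv : G -> G) (act : G -> X -> X) (h : X -> R) (g : G) :
  (forall g, continuous (act g)) -> continuous h -> continuous (gact inv act g h).
Proof. by move=> actc hc x; apply: continuous_comp; [exact: actc|exact: hc]. Qed.

Section MuOperator.
Variables (R : realType) (G : Type) (X : topologicalType) (I : choiceType).
Variables (inv : G -> G) (act : G -> X -> X) (s : I -> G) (f : I -> X -> R).
Hypothesis gp : is_gen_prob_measure s f.
Variables (h : X -> R) (M : R).
Hypotheses (h0 : forall x, 0 <= h x) (hM : forall x, h x <= M).

Definition mu_term (i : I) (x : X) : R := f i x * gact inv act (s i) h x * f i x.

Let f_ge0 : forall i x, 0 <= f i x. Proof. by case: gp. Qed.



Lemma sum_sq_le1 (F : set I) (x : X) :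
  finite_set F -> \sum_(i \in F) f i x ^+ 2 <= 1.
Proof.
case: gp => _ _ _ H1 fF; rewrite -lee_fin -fsumEFin // -(H1 x).
by apply: esum_ge; exists F.
Qed.

(* Each term is nonnegative and bounded by M f_i^2, so the series is
   dominated by M sum_i f_i^2 = M. *)
Lemma mu_term_ge0 (i : I) (x : X) : 0 <= mu_term i x.
Proof. by rewrite /mu_term /gact !mulr_ge0. Qed.

Lemma mu_term_le (i : I) (x : X) : mu_term i x <= M * f i x ^+ 2.
Proof.
rewrite /mu_term /gact expr2 mulrAC mulrC ler_wpM2r ?mulr_ge0 //.
Qed.

Lemma mu_apply_sum (x : X) :
  has_unordered_sum (mu_term^~ x) (mu_apply inv act s f h x).
Proof.
apply: xgetPex; apply: (unordered_sum_exists (mu_term_ge0^~ x)) => F fF.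
have M_ge0 : 0 <= M by apply: le_trans (hM x).
apply: (@le_trans _ _ (\sum_(i \in F) M * f i x ^+ 2)).
  by apply: ler_fsum => // i _; exact: mu_term_le.
by rewrite -mulr_fsumr; apply: ler_piMr => //; exact: sum_sq_le1.
Qed.

Lemma mu_apply_ge_partial (F : set I) (x : X) :
  finite_set F -> \sum_(i \in F) mu_term i x <= mu_apply inv act s f h x.
Proof.
exact: unordered_sum_ge_partial (mu_term_ge0^~ x) (mu_apply_sum x) F.
Qed.

Hypotheses (cpt : compact [set: X]) (actc : forall g, continuous (act g)).
Hypothesis hc : continuous h.

Let sq_continuous : forall i, continuous (fun x => f i x ^+ 2).
Proof. by case: gp => fc _ _ _ i; apply: continuous_mul. Qed.

Lemma mu_term_continuous (i : I) : continuous (mu_term i).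
Proof.
case: gp => fc _ _ _; rewrite /mu_term.
apply: continuous_mul => //; apply: continuous_mul => //.
exact: translate_continuous.
Qed.

Hypothesis M0 : 0 < M.

Lemma mu_apply_tail (e : R) : 0 < e -> exists2 F : set I, finite_set F &
  forall y, mu_apply inv act s f h y <= \sum_(i \in F) mu_term i y + e.
Proof.
move=> e0; have eM : 0 < e / M by exact: divr_gt0.
have sq_ge1 : forall x, (1%:E <= \esum_(i in [set: I]) ((f i x) ^+ 2)%:E)%E.
  by case: gp => _ _ _ H1 x; rewrite H1.
have [F1 [fF1 _ HF1]] := esum_uniform_finite_approx cpt sq_continuous
  (fun i x => sqr_ge0 (f i x)) eM sq_ge1.
exists F1 => // y; apply/ler_addgt0Pr => e' e'0.
have [F0 fF0 HF0] := mu_apply_sum y e'0.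
have fF : finite_set (F0 `|` F1) by rewrite finite_setU.
have := HF0 _ fF (@subsetUl _ F0 F1).
have tail : \sum_(i \in F0 `|` F1) mu_term i y - \sum_(i \in F1) mu_term i y <= e.
  have gap := @fsum_le_subset _ _ (fun i => M * f i y ^+ 2 - mu_term i y) F1
    (F0 `|` F1) fF1 fF (@subsetUr _ F0 F1).
  have /gap : forall i, 0 <= M * f i y ^+ 2 - mu_term i y.
    by move=> i; rewrite subr_ge0 mu_term_le.
  rewrite !fsumrB // -!mulr_fsumr.
  have := sum_sq_le1 y fF; have := HF1 y.
  set QF := \sum_(i \in F0 `|` F1) f i y ^+ 2; set QF1 := \sum_(i \in F1) f i y ^+ 2.
  have Me : M * (e / M) = e by rewrite mulrC divfK // gt_eqF.
  move=> h1 h2 h3.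
  have : M * QF <= M by apply: ler_piMr => //; exact: ltW.
  have : M * (1 - e / M) < M * QF1 by rewrite ltr_pM2l.
  rewrite mulrBr mulr1 Me; lra.
rewrite distrC; have := ler_norm (mu_apply inv act s f h y - \sum_(i \in F0 `|` F1) mu_term i y).
lra.
Qed.

Lemma mu_apply_continuous : continuous (mu_apply inv act s f h).
Proof.
apply: continuous_uniform_lower_approx => e e0.
have [F fF tail] := mu_apply_tail e0.
exists (fun y => \sum_(i \in F) mu_term i y).
  exact: continuous_fsum fF mu_term_continuous.
by move=> y; rewrite mu_apply_ge_partial ?tail.
Qed.

Lemma mu_apply_dominates_translate (g : G) : full_support s f ->
  exists2 c, 0 < c & forall y, c * gact inv act g h y <= mu_apply inv act s f h y.
Proof.
move=> fs; have [d d0 Hd] := fs g.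
have d2 : 0 < d / 2 by lra.
have [F [fF Fg HF]] := esum_uniform_finite_approx cpt sq_continuous
  (fun i x => sqr_ge0 (f i x)) d2 Hd.
exists (d / 2) => // y; apply: le_trans (mu_apply_ge_partial y fF).
have -> : \sum_(i \in F) mu_term i y = (\sum_(i \in F) f i y ^+ 2) * gact inv act g h y.
  rewrite mulr_fsuml; apply: eq_fsbigr => i /set_mem /Fg /= sig.
  by rewrite /mu_term sig expr2 mulrAC.
apply: ler_wpM2r; first exact: h0.
by have := HF y; lra.
Qed.

End MuOperator.

Lemma stationary_null_translates (R : realType) (G : Type) (X : topologicalType)
    (I : choiceType) (inv : G -> G) (act : G -> X -> X) (s : I -> G)
    (f : I -> X -> R) (tau : (X -> R) -> R) (h : X -> R) :
  compact [set: X] -> (forall g, continuous (act g)) ->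
  is_gen_prob_measure s f -> full_support s f ->
  is_state tau -> is_stationary inv act s f tau ->
  continuous h -> (forall x, 0 <= h x) -> tau h <= 0 ->
  forall g, tau (gact inv act g h) = 0.
Proof.
move=> cpt actc gp fs st stat hc h0 tau_h g.
have [M M0 hM] := continuous_bounded cpt hc.
have gh_c : continuous (gact inv act g h) by exact: translate_continuous.
have [c c0 dom] := mu_apply_dominates_translate inv act gp h0 hM cpt g fs.
have := state_mono st (continuous_mul (@cst_continuous _ _ c) gh_c)
  (mu_apply_continuous gp h0 hM cpt actc hc M0) dom.
rewrite state_scale // stat // => c_tau_gh.
case: st => _ pos _; apply/eqP; rewrite eq_le pos ?andbT //; last first.
  by move=> x; exact: h0.
by rewrite -(pmulr_rle0 _ c0); exact: le_trans tau_h.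
Qed.

Lemma is_group_invK (G : Type) (mul : G -> G -> G) (one : G) (inv : G -> G) :
  is_group mul one inv -> forall g, inv (inv g) = g.
Proof.
case=> assoc one_l one_r invl _ g.
by rewrite -[RHS]one_l -(invl (inv g)) -assoc invl one_r.
Qed.

Lemma minimal_translates_cover (R : realType) (G : choiceType) (mul : G -> G -> G)
    (one : G) (inv : G -> G) (X : topologicalType) (act : G -> X -> X) (h : X -> R) :
  is_group mul one inv -> is_homeo_action mul one act -> minimal_action act ->
  compact [set: X] -> continuous h -> (forall x, 0 <= h x) -> (exists x, h x != 0) ->
  exists D : {fset G * R}, (forall p, p \in D -> 0 < p.2) /\
    forall y, 1 <= \sum_(p <- D) p.2^-1 * gact inv act p.1 h y.
Proof.
move=> grp [_ _ actc] mini cpt hc h0 [x0 hx0].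
pose V (p : G * R) := [set y | p.2 < gact inv act p.1 h y].
have Vo p : [set p | 0 < p.2] p -> open (V p).
  by move=> _; apply: open_gt_continuous; exact: translate_continuous.
have Vc y : exists2 p, [set p : G * R | 0 < p.2] p & V p y.
  have orbit_x0 : closure (range (fun g => act g y)) x0 by rewrite mini.
  have pos_open : open [set z | 0 < h z] by exact: open_gt_continuous.
  have hx0_pos : 0 < h x0 by rewrite lt_neqAle eq_sym hx0 h0.
  have [z [[g _ <-] /= gy_pos]] := orbit_x0 _ (open_nbhs_nbhs (conj pos_open hx0_pos)).
  exists (inv g, h (act g y) / 2); rewrite /V /gact /= ?(is_group_invK grp); lra.
have [D [Dpos cov]] := compact_finite_subcover cpt Vo Vc.
exists D; split => // y; have [p pD Vpy] := cov y.
rewrite (big_fsetD1 p pD) /=.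
have rest_ge0 : 0 <= \sum_(q <- (D `\ p)%fset) q.2^-1 * gact inv act q.1 h y.
  rewrite big_seq; apply: sumr_ge0 => q; rewrite in_fsetD1 => /andP [_ qD].
  by apply: mulr_ge0; [rewrite invr_ge0 ltW // Dpos|exact: h0].
have p_pos : 0 < p.2 := Dpos p pD.
have : 1 < p.2^-1 * gact inv act p.1 h y by rewrite -ltr_pdivrMl ?invr_gt0 // invrK mulr1.
lra.
Qed.

Unset Implicit Arguments.

Theorem mainTheorem16 (R : realType) (G : countType) (mul : G -> G -> G) (one : G)
    (inv : G -> G) (X : topologicalType) (act : G -> X -> X)
    (I : choiceType) (s : I -> G) (f : I -> X -> R) :
  is_group mul one inv ->
  compact [set: X] -> hausdorff_space X ->
  is_homeo_action mul one act ->
  minimal_action act ->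
  is_gen_prob_measure s f ->
  full_support s f ->
  forall tau : (X -> R) -> R,
    is_state tau -> is_stationary inv act s f tau -> is_faithful tau.
Proof.
move=> grp cpt _ hact mini gp fs tau st stat h hc h0 hnz.
rewrite ltNge; apply/negP => tau_h.
have actc : forall g, continuous (act g) by case: hact.
have null := stationary_null_translates cpt actc gp fs st stat hc h0 tau_h.
have [D [_ cover]] := minimal_translates_cover grp hact mini cpt hc h0 hnz.
have gh_c (p : G * R) : continuous (gact inv act p.1 h) by exact: translate_continuous.
have k_c : continuous (fun y => \sum_(p <- D) p.2^-1 * gact inv act p.1 h y).
  by apply: continuous_bigsum => p; apply: continuous_mul => //; exact: cst_continuous.
have := state_mono st (@cst_continuous _ _ (1 : R)) k_c cover.
rewrite state_bigsum // big1 => [|p _]; last by rewrite null mulr0.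
by case: st => _ _ ->; rewrite ler10.
Qed.
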